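(* For every triple $m,n,d$ of positive integers with $n\geqslant d$, and every $\eta>0$, there exists an integer $N\geqslant n$ with the following property. If $\mathcal{X}$ is a set with $|\mathcal{X}|=m$ and $\boldsymbol{X}$ is an $\mathcal{X}$-valued, $d$-dimensional random array on a set $I\subseteq\mathbb{N}$ with $|I|\geqslant N$, then there exists $J\subseteq I$ with $|J|=n$ such that the random array $\boldsymbol{X}_J$ is $\eta$-spreadable.
   Context: $\binom{I}{d}$ is the set of $d$-element subsets of $I$. A $d$-dimensional random array on $I$ is a stochastic process $\boldsymbol{X}=\langle X_s:s\in\binom{I}{d}\rangle$; for $J\subseteq I$ with $|J|\geqslant d$, $\boldsymbol{X}_J=\langle X_s:s\in\binom{J}{d}\rangle$. A $d$-dimensional random array $\boldsymbol{Y}$ on a set $L\subseteq\mathbb{N}$ is $\eta$-spreadable if for every pair $J,K$ of finite subsets of $L$ with $|J|=|K|\geqslant d$, the total variation distance between the laws of $\boldsymbol{Y}_J$ and $\boldsymbol{Y}_K$ (identified via the increasing bijection $J\to K$) is at most $\eta$. *)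

From HB Require Import structures.
From mathcomp Require Import all_boot all_order all_algebra finmap.
From mathcomp Require Import all_classical all_reals all_analysis.
Set Implicit Arguments. Unset Strict Implicit. Unset Printing Implicit Defensive.
Import Order.TTheory GRing.Theory Num.Theory.
Local Open Scope ring_scope.
Local Open Scope classical_set_scope.

Definition dsub (d k : nat) := {S : {set 'I_k} | #|S| == d}.

(* This is the increasing identification of
   the subsets of J with the subsets of {0,...,k-1}. *)
Definition img (k : nat) (J : k.-tuple nat) (S : {set 'I_k}) : {fset nat} :=
  [fset tnth J i | i in S]%fset.

Section Law.
Variables (R : realType) (dT : measure_display) (T : measurableType dT)
  (P : probability T R) (Xty : finType) (X : {fset nat} -> T -> Xty) (d : nat).

(* The value at t of the subarray X_J, re-indexed by d-subsets of 'I_k. *)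
Definition patt (k : nat) (J : k.-tuple nat) (t : T) : {ffun dsub d k -> Xty} :=
  [ffun S => X (img J (val S)) t].

Definition law_ev (k : nat) (J : k.-tuple nat) (A : {set {ffun dsub d k -> Xty}}) : R :=
  fine (P [set t | patt J t \in A]).

Definition dTV (k : nat) (J K : k.-tuple nat) : R :=
  \big[Num.max/0]_(A : {set {ffun dsub d k -> Xty}}) `|law_ev J A - law_ev K A|.

Definition spreadable (eta : R) (L : set nat) : Prop :=
  forall k : nat, (d <= k)%N -> forall J K : k.-tuple nat,
    sorted ltn J -> sorted ltn K ->
    (forall i, L (tnth J i)) -> (forall i, L (tnth K i)) ->
    dTV J K <= eta.
End Law.

From HB Require Import structures.
From mathcomp Require Import all_boot all_order all_algebra finmap.
From mathcomp Require Import all_classical all_reals all_analysis.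
From mathcomp Require Import lra zify.
Set Implicit Arguments. Unset Strict Implicit. Unset Printing Implicit Defensive.
Import Order.TTheory GRing.Theory Num.Theory.

(* Colour every n-element set S of indices by the law of the subarray on S,
   each event probability rounded down to a multiple of eta.  The number of
   colours depends only on m, n, d and eta, so by the finite Ramsey theorem
   any sufficiently large index set contains 2n indices whose n-subsets all
   have the same colour.  Let J be the n smallest of them.  A k-subset of J,
   padded with n - k of the n largest indices, is an n-subset whose first k
   coordinates carry the subarray on the k-subset; hence the laws of any two
   k-subsets of J give every event probabilities that differ by at most eta. *)

Lemma card_geq_subset (T : finType) (A : {set T}) n :
  n <= #|A| -> exists2 B : {set T}, B \subset A & #|B| = n.
Proof.
case/card_geqP=> s [us <- sA]; exists [set x in s]; last by rewrite cardsE; apply/card_uniqP.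
by apply/fintype.subsetP=> x; rewrite inE; apply: sA.
Qed.

Lemma size_sum_count_mem (T : finType) (s : seq T) :
  size s = \sum_(y : T) count_mem y s.
Proof.
elim: s => [|x s IH] /=; first by rewrite big1.
by rewrite big_split /= -IH (bigD1 x) //= eqxx big1 // => y; rewrite eq_sym => /negbTE ->.
Qed.

Lemma pigeonhole_count_mem (T : finType) (s : seq T) n :
  #|T| * n < size s -> exists y, n < count_mem y s.
Proof.
move=> lt_s; apply/existsP; apply: contraTT lt_s => /existsPn small.
rewrite -leqNgt size_sum_count_mem -sum_nat_const leq_sum // => y _.
by rewrite leqNgt small.
Qed.

Section Monochromatic.
Variables (T C : finType) (col : {set T} -> C) (r : nat).

Definition monochromatic (H : {set T}) (y : C) :=
  forall A : {set T}, A \subset H -> #|A| = r -> col A = y.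

Lemma monochromaticS (H H' : {set T}) y :
  H' \subset H -> monochromatic H y -> monochromatic H' y.
Proof. by move=> sH'H mH A sAH'; apply: mH; apply: fintype.subset_trans sH'H. Qed.

End Monochromatic.

Definition ramsey_bound (r c n N : nat) :=
  forall (T C : finType), #|C| <= c ->
  forall (col : {set T} -> C) (W : {set T}), N <= #|W| ->
  exists2 H : {set T}, H \subset W & #|H| = n /\ exists y, monochromatic col r H y.

Section EndMonochromatic.
Variables (T C : finType) (col : {set T} -> C) (r : nat).

(* The end-homogeneous sequences of the Erdos-Rado proof: a point p carrying
   colour y gives colour y to p together with any r points listed after it. *)
Fixpoint end_monochromatic (s : seq (T * C)) : Prop :=
  if s is (p, y) :: s' then
    monochromatic (fun A => col (p |: A)) r [set x in map fst s'] y /\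
    end_monochromatic s'
  else True.

Lemma end_monochromatic_class (s : seq (T * C)) y :
  end_monochromatic s ->
  monochromatic col r.+1 [set x in map fst [seq x <- s | x.2 == y]] y.
Proof.
elim: s => [|[p z] s IH] /=.
  move=> _ B /subset_leq_card + cardB; rewrite cardB cardsE.
  by move/leq_trans/(_ (card_size _)).
case=> mp /IH{}IH; case: eqP IH => [<-|_] IH //= B sB cardB.
have sBp : B :\ p \subset [set x in map fst [seq x <- s | x.2 == z]].
  apply/fintype.subsetP=> x; rewrite !inE => /andP[xp /(fintype.subsetP sB)].
  by rewrite !inE (negbTE xp).
have [pB|pNB] := boolP (p \in B); last first.
  apply: (IH B) cardB; apply: fintype.subset_trans sBp.
  by rewrite subsetD1 subxx pNB.
rewrite -(finset.setD1K pB); apply: mp.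
  apply: fintype.subset_trans sBp _; apply/fintype.subsetP=> x; rewrite !inE.
  exact/mem_subseq/map_subseq/filter_subseq.
by move: cardB; rewrite (cardsD1 p) pB => -[].
Qed.

End EndMonochromatic.

Section RamseyStep.
Variables (r c : nat).
Hypothesis ramsey_r : forall n, exists N, ramsey_bound r c n N.

Lemma end_monochromatic_bound t : exists N,
  forall (T C : finType), #|C| <= c ->
  forall (col : {set T} -> C) (W : {set T}), N <= #|W| ->
  exists s : seq (T * C), [/\ size s = t, uniq (map fst s),
    {subset map fst s <= W} & end_monochromatic col r s].
Proof.
elim: t => [|t [N IH]]; first by exists 0 => T C _ col W _; exists [::].
have [N' HN'] := ramsey_r N.
exists N'.+1 => T C cC col W leW.
have [p pW] : exists p, p \in W by apply/set0Pn; rewrite -card_gt0 (leq_trans _ leW).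
have leWp : N' <= #|W :\ p| by move: leW; rewrite (cardsD1 p) pW.
have [H sHWp [cardH [y mH]]] := HN' T C cC (fun A => col (p |: A)) (W :\ p) leWp.
have [s [sz us sH ms]] := IH T C cC col H (eq_leq (esym cardH)).
have sWp : {subset map fst s <= W :\ p} by move=> x /sH /(fintype.subsetP sHWp).
exists ((p, y) :: s); split => /=.
- by rewrite sz.
- by rewrite us andbT; apply/negP => /sWp; rewrite setD11.
- by move=> x; rewrite inE => /predU1P [-> //| /sWp /setD1P []].
- split => //; apply: monochromaticS mH.
  by apply/fintype.subsetP => x; rewrite inE; apply: sH.
Qed.

End RamseyStep.

Lemma ramsey r c n : exists N, ramsey_bound r c n N.
Proof.
elim: r c n => [|r IH] c n.
  exists n => T C _ col W /card_geq_subset [H sHW cardH].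
  by exists H => //; split => //; exists (col finset.set0) => A _ /cards0_eq ->.
have [N HN] := end_monochromatic_bound (IH c) (c * n).+1.
exists N => T C cC col W leW.
have [s [sz us sW ms]] := HN T C cC col W leW.
have [y lt_y] : exists y, n < count_mem y (map snd s).
  by apply: pigeonhole_count_mem; rewrite size_map sz ltnS leq_mul2r cC orbT.
pose H0 := [set x in map fst [seq x <- s | x.2 == y]].
have uH0 : uniq (map fst [seq x <- s | x.2 == y]).
  exact: subseq_uniq (map_subseq _ (filter_subseq _ s)) us.
have [H sHH0 cardH] : exists2 H : {set T}, H \subset H0 & #|H| = n.
  apply: card_geq_subset; move/card_uniqP: uH0; rewrite cardsE => ->.
  by rewrite size_map size_filter; move: lt_y; rewrite count_map; apply: ltnW.
exists H.
  apply: fintype.subset_trans sHH0 _; apply/fintype.subsetP => x; rewrite inE => xs.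
  by apply: sW; apply: (mem_subseq (map_subseq fst (filter_subseq _ s))) xs.
by split => //; exists y; apply: monochromaticS sHH0 (end_monochromatic_class ms).
Qed.

Lemma card_set (T : finType) : #|{set T}| = 2 ^ #|T|.
Proof.
rewrite -cardsT -(card_powerset [set: T]); apply: eq_card => A.
by rewrite powersetE finset.subsetT inE.
Qed.

Section IncreasingImage.
Variables (V : finType) (f : V -> nat).
Hypothesis f_inj : injective f.

Definition incr_img (S : {set V}) : seq nat := sort leq [seq f i | i <- enum S].

Lemma size_incr_img (S : {set V}) : size (incr_img S) = #|S|.
Proof. by rewrite size_sort size_map cardE. Qed.

Lemma incr_img_sorted (S : {set V}) : sorted ltn (incr_img S).
Proof.
rewrite ltn_sorted_uniq_leq sort_uniq map_inj_uniq ?enum_uniq //=.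
exact: (sort_sorted leq_total).
Qed.

Lemma incr_imgP (S : {set V}) x : reflect (exists2 i, i \in S & x = f i) (x \in incr_img S).
Proof.
rewrite mem_sort; apply: (iffP mapP) => -[i iS ->]; exists i => //.
  by rewrite -mem_enum.
by rewrite mem_enum.
Qed.

Lemma incr_img_preim (S : {set V}) (s : seq nat) :
  sorted ltn s -> {subset s <= incr_img S} -> incr_img [set i in S | f i \in s] = s.
Proof.
move=> s_sorted sS; apply: (irr_sorted_eq ltn_trans ltnn (incr_img_sorted _) s_sorted).
move=> x; apply/incr_imgP/idP => [[i] |xs]; first by rewrite inE => /andP[_ +] ->.
by have /incr_imgP[i iS xE] := sS x xs; exists i; rewrite // inE iS -xE.
Qed.

Lemma incr_img_pad (H : {set V}) (a b : nat) (s : seq nat) :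
  sorted ltn s -> {subset s <= take a (incr_img H)} ->
  size s <= b <= size s + (#|H| - a) ->
  exists2 S : {set V}, S \subset H & #|S| = b /\ take (size s) (incr_img S) = s.
Proof.
move=> s_sorted sH /andP[le_sb le_b].
set t := incr_img H; set u := s ++ take (b - size s) (drop a t).
have t_pw : pairwise ltn (take a t ++ drop a t).
  by rewrite cat_take_drop -sorted_pairwise //; [apply: incr_img_sorted | apply: ltn_trans].
have u_sorted : sorted ltn u.
  rewrite sorted_pairwise; last exact: ltn_trans.
  move: t_pw; rewrite !pairwise_cat -!sorted_pairwise; try exact: ltn_trans.
  case/and3P => /allrelP lt_td _ td_sorted; apply/and3P; split => //.
  - apply/allrelP => x y /sH xt /mem_take; exact: lt_td.
  - exact: take_sorted.
have ut : {subset u <= t}.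
  move=> x; rewrite mem_cat => /orP[/sH /mem_take // | /mem_take /mem_drop //].
exists [set i in H | f i \in u].
  by apply/fintype.subsetP => i; rewrite inE => /andP[].
rewrite -size_incr_img incr_img_preim // size_cat size_take size_drop size_incr_img.
rewrite take_size_cat //; split => //.
by case: ltnP; lia.
Qed.

Definition incr_tuple n (S : {set V}) : n.-tuple nat :=
  insubd (nseq_tuple n 0) (incr_img S).

Lemma incr_tupleE n (S : {set V}) : #|S| = n -> val (incr_tuple n S) = incr_img S.
Proof. by move=> cardS; rewrite insubdK // unfold_in /= size_incr_img cardS. Qed.

Lemma incr_tuple_sorted n (S : {set V}) : #|S| = n -> sorted ltn (incr_tuple n S).
Proof. by move/incr_tupleE ->; apply: incr_img_sorted. Qed.

End IncreasingImage.

Local Open Scope ring_scope.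
Local Open Scope classical_set_scope.

Section Buckets.
Variable R : archiRealFieldType.

Lemma truncn_eq_dist (x y : R) : 0 <= x -> 0 <= y ->
  Num.truncn x = Num.truncn y -> `|x - y| < 1.
Proof.
move=> /truncn_itv /andP[x_ge x_lt] /truncn_itv /andP[y_ge y_lt] xy.
rewrite xy in x_ge x_lt; rewrite -natr1 in x_lt y_lt.
by rewrite ltr_norml; apply/andP; split; lra.
Qed.

(* inord truncates, so bucket is only meaningful for 0 <= v <= 1. *)
Definition bucket (eta v : R) : 'I_(Num.truncn eta^-1).+1 := inord (Num.truncn (v / eta)).

Lemma bucket_dist (eta v w : R) : 0 < eta -> 0 <= v <= 1 -> 0 <= w <= 1 ->
  bucket eta v = bucket eta w -> `|v - w| <= eta.
Proof.
move=> eta_gt0 v01 w01 /(congr1 (@nat_of_ord _)).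
have valE u : 0 <= u <= 1 -> (bucket eta u : nat) = Num.truncn (u / eta).
  case/andP=> u_ge0 u_le1; rewrite /bucket inordK // ltnS le_truncn //.
  by rewrite ler_pdivrMr // mulVf ?gt_eqF.
have ge0 u : 0 <= u <= 1 -> 0 <= u / eta by case/andP=> u_ge0 _; exact: divr_ge0 (ltW eta_gt0).
rewrite !valE // => /(truncn_eq_dist (ge0 _ v01) (ge0 _ w01)).
by rewrite -mulrBl normrM normfV (gtr0_norm eta_gt0) ltr_pdivrMr // mul1r => /ltW.
Qed.

End Buckets.

Lemma card_img k (J : k.-tuple nat) (U : {set 'I_k}) : uniq J -> #|` img J U|%fset = #|U|.
Proof.
move=> J_uniq; rewrite card_imfset; last exact/tuple_uniqP.
by rewrite cardE; apply/perm_size/uniq_perm; rewrite ?enum_finmem_uniq ?enum_uniq.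
Qed.

Section SubarrayLaws.
Variables (R : realType) (dT : measure_display) (T : measurableType dT)
  (P : probability T R) (Xty : finType) (X : {fset nat} -> T -> Xty) (d : nat).

Section Measurability.
Variable I : set nat.
Hypothesis X_meas : forall s : {fset nat}, (forall x, x \in s -> I x) ->
  #|` s|%fset = d -> forall x : Xty, measurable (X s @^-1` [set x]).
Variables (k : nat) (J : k.-tuple nat).
Hypotheses (J_uniq : uniq J) (J_I : forall i, I (tnth J i)).

Lemma measurable_patt (A : {set {ffun dsub d k -> Xty}}) :
  measurable [set t | patt X d J t \in A].
Proof.
have -> : [set t | patt X d J t \in A] = \bigcup_(p in [set p | p \in A])
    \bigcap_(U in [set: dsub d k]) (X (img J (val U)) @^-1` [set p U]).
  apply/seteqP; split => t /=.
    by move=> tA; exists (patt X d J t) => //= U _; rewrite /patt ffunE.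
  case=> p pA Hp; suff -> : patt X d J t = p by [].
  by apply/ffunP => U; rewrite ffunE; exact: Hp.
apply: fin_bigcup_measurable; first exact: finite_finset.
move=> p _; apply: fin_bigcap_measurable; first exact: finite_finset.
move=> U _; apply: X_meas; last by rewrite card_img //; apply/eqP; exact: (valP U).
by move=> x /imfsetP [i /= _ ->].
Qed.

Lemma law_ev_in01 (A : {set {ffun dsub d k -> Xty}}) : 0 <= law_ev P X J A <= 1.
Proof.
have := probability_le1 P (measurable_patt A).
have : (0 <= P [set t | patt X d J t \in A])%E := measure_ge0 _ _.
by rewrite /law_ev; case: (P _) => //= x; rewrite !lee_fin => -> ->.
Qed.

End Measurability.

Section Restriction.
Variables (k n : nat) (hk : (k <= n)%N).

Lemma card_widen_dsub (U : dsub d k) : #|widen_ord hk @: val U| == d.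
Proof.
by rewrite card_imset; [exact: (valP U) | move=> i j [] /val_inj].
Qed.

Definition widen_dsub (U : dsub d k) : dsub d n :=
  exist (fun S : {set 'I_n} => #|S| == d) _ (card_widen_dsub U).

Definition lift_event (A : {set {ffun dsub d k -> Xty}}) : {set {ffun dsub d n -> Xty}} :=
  [set p : {ffun dsub d n -> Xty} | [ffun U => p (widen_dsub U)] \in A]%SET.

Lemma law_ev_take (J : k.-tuple nat) (S : n.-tuple nat) A :
  take k S = J -> law_ev P X J A = law_ev P X S (lift_event A).
Proof.
move=> SJ; rewrite /law_ev; congr (fine (P _)); apply/funext => t /=.
rewrite inE; congr (_ \in A); apply/ffunP => U; rewrite !ffunE /=; congr (X _ t).
apply/fsetP => x; apply/imfsetP/imfsetP => [[i iU ->]|[i]] /=.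
  exists (widen_ord hk i); first exact: imset_f.
  by rewrite !(tnth_nth 0) -SJ nth_take.
by case/imsetP => j jU -> ->; exists j; rewrite // !(tnth_nth 0) -SJ nth_take.
Qed.

End Restriction.
End SubarrayLaws.

Section LawColouring.
Variables (R : realType) (eta : R) (dT : measure_display) (T : measurableType dT)
  (P : probability T R) (Xty : finType) (X : {fset nat} -> T -> Xty) (d : nat)
  (I : set nat) (V : finType) (f : V -> nat) (n : nat).
Hypotheses (eta_gt0 : 0 < eta) (f_inj : injective f) (f_I : forall i, I (f i)).
Hypothesis X_meas : forall s : {fset nat}, (forall x, x \in s -> I x) ->
  #|` s|%fset = d -> forall x : Xty, measurable (X s @^-1` [set x]).

Definition law_colour (S : {set V}) :
    {ffun {set {ffun dsub d n -> Xty}} -> 'I_(Num.truncn eta^-1).+1} :=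
  [ffun A => bucket eta (law_ev P X (incr_tuple f n S) A)].

Lemma incr_tuple_I (S : {set V}) i : #|S| = n -> I (tnth (incr_tuple f n S) i).
Proof.
move=> cardS; have /incr_imgP[j _ ->] : tnth (incr_tuple f n S) i \in incr_img f S.
  by rewrite -(incr_tupleE _ cardS) mem_tnth.
exact: f_I.
Qed.

Lemma law_ev_incr_tuple_in01 (S : {set V}) (A : {set {ffun dsub d n -> Xty}}) :
  #|S| = n -> 0 <= law_ev P X (incr_tuple f n S) A <= 1.
Proof.
move=> cardS; apply: (law_ev_in01 P X_meas) => [|i]; last exact: incr_tuple_I.
exact: (sorted_uniq ltn_trans ltnn (incr_tuple_sorted f_inj cardS)).
Qed.

Lemma dTV_le_of_law_colour k (hk : (k <= n)%N) (S1 S2 : {set V}) (J K : k.-tuple nat) :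
  #|S1| = n -> #|S2| = n -> take k (incr_img f S1) = J -> take k (incr_img f S2) = K ->
  law_colour S1 = law_colour S2 -> dTV P X d J K <= eta.
Proof.
move=> card1 card2 take1 take2 same; apply: bigmax_le => [|A _]; first exact: ltW.
rewrite (law_ev_take P X hk A (S := incr_tuple f n S1)) ?incr_tupleE //.
rewrite (law_ev_take P X hk A (S := incr_tuple f n S2)) ?incr_tupleE //.
apply: bucket_dist; rewrite ?law_ev_incr_tuple_in01 //.
by move/ffunP/(_ (lift_event hk A)): same; rewrite !ffunE.
Qed.

Lemma spreadable_of_monochromatic (H : {set V}) y :
  #|H| = (n + n)%N -> monochromatic law_colour n H y ->
  exists J : n.-tuple nat,
    sorted ltn J /\ (forall i, I (tnth J i)) /\ spreadable P X d eta [set x | x \in J].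
Proof.
move=> cardH monoH; set t := incr_img f H.
have t_sorted : sorted ltn t by apply: incr_img_sorted.
pose H1 := [set i in H | f i \in take n t].
have H1E : incr_img f H1 = take n t.
  by apply: incr_img_preim => //; [exact: take_sorted | move=> x; apply: mem_take].
have size_t : size (take n t) = n by rewrite size_takel // size_incr_img cardH leq_addr.
have cardH1 : #|H1| = n by rewrite -(size_incr_img f) H1E.
have J1E : val (incr_tuple f n H1) = take n t by rewrite incr_tupleE.
exists (incr_tuple f n H1); split; first exact: incr_tuple_sorted.
split=> [i|]; first exact: incr_tuple_I.
move=> k _ J K J_sorted K_sorted J_in K_in.
have sub_t (L : k.-tuple nat) : (forall i, [set x | x \in incr_tuple f n H1] (tnth L i)) ->
    {subset L <= take n t}.
  by move=> L_in x /tnthP[i ->]; rewrite -J1E; apply: L_in.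
have hk : (k <= n)%N.
  rewrite -(size_tuple J) -size_t; apply: uniq_leq_size (sub_t _ J_in).
  exact: (sorted_uniq ltn_trans ltnn J_sorted).
have pad (L : k.-tuple nat) : sorted ltn L -> {subset L <= take n t} ->
    exists2 S : {set V}, S \subset H & #|S| = n /\ take k (incr_img f S) = L.
  move=> L_sorted L_t; have := incr_img_pad f_inj L_sorted L_t.
  by rewrite size_tuple; apply; rewrite hk cardH addnK leq_addl.
have [S1 S1H [card1 take1]] := pad J J_sorted (sub_t _ J_in).
have [S2 S2H [card2 take2]] := pad K K_sorted (sub_t _ K_in).
apply: (dTV_le_of_law_colour hk card1 card2 take1 take2).
by rewrite (monoH S1) ?(monoH S2).
Qed.

End LawColouring.

Theorem proposition1p3 (m n d : nat) :
  (0 < m)%N -> (0 < n)%N -> (0 < d)%N -> (d <= n)%N ->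
  forall (R : realType) (eta : R), 0 < eta ->
  exists N : nat, (n <= N)%N /\
    forall (Xty : finType), #|Xty| = m ->
    forall (dT : measure_display) (T : measurableType dT) (P : probability T R)
           (I : set nat),
      (exists f : 'I_N -> nat, injective f /\ forall i, I (f i)) ->
    forall X : {fset nat} -> T -> Xty,
      (forall s : {fset nat}, (forall x, x \in s -> I x) -> #|` s|%fset = d ->
         forall x : Xty, measurable (X s @^-1` [set x])) ->
    exists J : n.-tuple nat,
      sorted ltn J /\ (forall i, I (tnth J i)) /\
      spreadable P X d eta [set x | x \in J].
Proof.
move=> _ _ _ _ R eta eta_gt0.
have [N0 HN0] := ramsey n ((Num.truncn eta^-1).+1 ^ 2 ^ m ^ #|{: dsub d n}|) (n + n).
exists (maxn N0 n); split => [|Xty cardX dT T P I [f [f_inj f_I]] X X_meas].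
  exact: leq_maxr.
have [||H _ [cardH [y monoH]]] :=
  HN0 _ _ _ (law_colour eta P X d f n) [set: 'I_(maxn N0 n)]%SET.
- by rewrite !card_ffun card_ord card_set card_ffun cardX.
- by rewrite cardsT card_ord leq_maxl.
exact: spreadable_of_monochromatic monoH.
Qed.
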